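(* Let $G=(V,E,w)$ be a connected undirected graph with positive edge weights $w:E\to\mathbb{R}_{+}$, let $v\in V$, and let $E_v$ be a set of node pairs $\{u,v\}$ with $u\neq v$ and $\{u,v\}\notin E$ (candidate edges incident to $v$), each $e\in E_v$ having a given positive weight $w(e)$. For $S\subseteq E_v$ let $\mathcal{R}(S)$ denote the resistance distance of $v$ in the augmented graph $G(S)$. Then $\mathcal{R}$ is monotonically decreasing: for any subsets $S\subsetneq T\subseteq E_v$, $$\mathcal{R}(T)<\mathcal{R}(S).$$
   Context: For a connected weighted graph $H$ on node set $V$ with $|V|=n$, its Laplacian is $\mathbf{L}=\mathbf{D}-\mathbf{A}$, where $\mathbf{A}$ is the weighted adjacency matrix and $\mathbf{D}$ the diagonal matrix of weighted degrees; $\mathbf{L}^\dagger$ denotes its Moore–Penrose pseudoinverse. For nodes $a,b$ let $\mathbf{b}_{a,b}=\mathbf{e}_a-\mathbf{e}_b$ (standard basis vectors). The resistance distance between $a$ and $b$ is $\mathcal{R}_{ab}=\mathbf{b}_{a,b}^\top\mathbf{L}^\dagger\mathbf{b}_{a,b}$, and the resistance distance of node $v$ is $\mathcal{R}_v=\sum_{u\in V}\mathcal{R}_{uv}$. For $S\subseteq E_v$, $G(S)=(V,E\cup S,w')$ is the graph obtained by adding the edges of $S$ with their given weights (weights of edges in $E$ unchanged). *)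

From HB Require Import structures.
From mathcomp Require Import all_boot all_order all_algebra.
From mathcomp Require Import reals.
From Stdlib Require Import ClassicalEpsilon.

Set Implicit Arguments. Unset Strict Implicit. Unset Printing Implicit Defensive.
Import Order.TTheory GRing.Theory Num.Theory.
Local Open Scope ring_scope.

Section Defs.
Variable R : realType.
Variable n : nat.

(* A weighted graph on node set 'I_n is given by its weighted adjacency
   function w : w x y > 0 iff {x,y} is an edge, with weight w x y. *)
Definition weighted_graph (w : 'I_n -> 'I_n -> R) : Prop :=
  (forall x y, w x y = w y x) /\ (forall x y, 0 <= w x y) /\ (forall x, w x x = 0).

Definition edge (w : 'I_n -> 'I_n -> R) : rel 'I_n := fun x y => 0 < w x y.

Definition connected_graph (w : 'I_n -> 'I_n -> R) : Prop :=
  forall x y, connect (edge w) x y.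

Definition adjmx (w : 'I_n -> 'I_n -> R) : 'M[R]_n := \matrix_(i, j) w i j.
Definition degmx (w : 'I_n -> 'I_n -> R) : 'M[R]_n :=
  \matrix_(i, j) (if i == j then \sum_k w i k else 0).
Definition laplacian (w : 'I_n -> 'I_n -> R) : 'M[R]_n := degmx w - adjmx w.

(* Moore--Penrose pseudoinverse: the (unique) matrix satisfying the four
   Penrose equations (real matrices, so adjoint = transpose). *)
Definition penrose (A X : 'M[R]_n) : Prop :=
  [/\ A *m X *m A = A, X *m A *m X = X, (A *m X)^T = A *m X & (X *m A)^T = X *m A].

Definition pinv (A : 'M[R]_n) : 'M[R]_n := epsilon (inhabits 0) (penrose A).

Definition bvec (a b : 'I_n) : 'cV[R]_n := \col_i ((i == a)%:R - (i == b)%:R).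

Definition resistance (w : 'I_n -> 'I_n -> R) (a b : 'I_n) : R :=
  ((bvec a b)^T *m pinv (laplacian w) *m bvec a b) 0 0.

Definition node_resistance (w : 'I_n -> 'I_n -> R) (v : 'I_n) : R :=
  \sum_u resistance w u v.

(* G(S): add the edges {u,v}, u in S, with weight c u *)
Definition augment (w : 'I_n -> 'I_n -> R) (v : 'I_n) (c : 'I_n -> R)
  (S : {set 'I_n}) : 'I_n -> 'I_n -> R :=
  fun x y => w x y + (if (x == v) && (y \in S) then c y
                      else if (y == v) && (x \in S) then c x else 0).

End Defs.

(* Rayleigh monotonicity.  If [L z = e_a - e_b] then [R_ab = z_a - z_b], which is
   half the Dirichlet energy of the potential [z].  Let [y] and [z] be the
   potentials of weights [g <= g'].  Expanding [0 <= E_g(y - z)] and comparing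
   [E_g(z)] with [E_g'(z) = 2 R'_ab] gives
   [(g' a b - g a b) (R'_ab)^2 <= 2 (R_ab - R'_ab)].  Adding the edges of
   [T \ S] at [v] therefore decreases every [R_uv], and strictly decreases
   [R_u0v] for [u0] in [T \ S]. *)

From HB Require Import structures.
From mathcomp Require Import all_boot all_order all_algebra.
From mathcomp Require Import reals ring lra.
From Stdlib Require Import ClassicalEpsilon.
Import Order.TTheory GRing.Theory Num.Theory.
Local Open Scope ring_scope.
Set Implicit Arguments. Unset Strict Implicit. Unset Printing Implicit Defensive.

Section DirichletForm.
Variables (R : realDomainType) (n : nat).
Implicit Types (g : 'I_n -> 'I_n -> R) (x z : 'I_n -> R).

Definition laplace g z i := \sum_j g i j * (z i - z j).

Definition dirichlet g x z := \sum_i \sum_j g i j * ((x i - x j) * (z i - z j)).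

Lemma dirichletE g x z : commutative g ->
  dirichlet g x z = 2 * \sum_i x i * laplace g z i.
Proof.
move=> gC.
have laplaceE : \sum_i x i * laplace g z i = \sum_i \sum_j g i j * (x i * (z i - z j)).
  by apply: eq_bigr => i _; rewrite mulr_sumr; apply: eq_bigr => j _; ring.
have swapped : \sum_i \sum_j g i j * (x j * (z i - z j)) = - \sum_i x i * laplace g z i.
  rewrite laplaceE exchange_big /= -sumrN; apply: eq_bigr => i _; rewrite -sumrN.
  by apply: eq_bigr => j _; rewrite gC; ring.
transitivity (\sum_i \sum_j g i j * (x i * (z i - z j))
              - \sum_i \sum_j g i j * (x j * (z i - z j))).
  by rewrite -sumrB; apply: eq_bigr => i _; rewrite -sumrB; apply: eq_bigr => j _; ring.
by rewrite swapped -laplaceE; ring.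
Qed.

Lemma dirichletB g x z :
  dirichlet g (fun i => x i - z i) (fun i => x i - z i)
  = dirichlet g x x - 2 * dirichlet g z x + dirichlet g z z.
Proof.
rewrite /dirichlet mulr_sumr -sumrB -big_split; apply: eq_bigr => i _.
rewrite mulr_sumr -sumrB -big_split; by apply: eq_bigr => j _ /=; ring.
Qed.

Lemma dirichlet_weightsB g g' z :
  dirichlet g' z z - dirichlet g z z = dirichlet (fun i j => g' i j - g i j) z z.
Proof.
by rewrite /dirichlet -sumrB; apply: eq_bigr => i _; rewrite -sumrB;
  apply: eq_bigr => j _; ring.
Qed.

Section NonnegativeWeights.
Variable g : 'I_n -> 'I_n -> R.
Hypothesis g_ge0 : forall i j, 0 <= g i j.

Let dirichlet_term_ge0 x i j : 0 <= g i j * ((x i - x j) * (x i - x j)).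
Proof. by rewrite mulr_ge0 // -expr2 sqr_ge0. Qed.

Lemma dirichlet_ge0 x : 0 <= dirichlet g x x.
Proof. by apply: sumr_ge0 => i _; apply: sumr_ge0 => j _. Qed.

Lemma dirichlet_ge_edge x a b : g a b * (x a - x b) ^+ 2 <= dirichlet g x x.
Proof.
rewrite /dirichlet (bigD1 a) //= (bigD1 b) //= -expr2 -addrA lerDl addr_ge0 //.
  by apply: sumr_ge0 => j _.
by apply: sumr_ge0 => i _; apply: sumr_ge0 => j _.
Qed.

Lemma dirichlet_eq0_connect x : dirichlet g x x = 0 ->
  forall i j, connect (fun k l => 0 < g k l) i j -> x i = x j.
Proof.
move=> x_E0.
have x_edge k l : 0 < g k l -> x k = x l.
  move=> g_kl.
  have row_k0 := psumr_eq0P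
    (fun k _ => sumr_ge0 _ (fun l _ => dirichlet_term_ge0 x k l)) x_E0 (i := k) isT.
  have /eqP := psumr_eq0P (fun l _ => dirichlet_term_ge0 x k l) row_k0 (i := l) isT.
  by rewrite -expr2 mulf_eq0 gt_eqF //= sqrf_eq0 subr_eq0 => /eqP.
move=> i j /connectP [p ip ->]; elim: p i ip => [|k p IHp] i //= /andP [ik kp].
by rewrite (x_edge _ _ ik) (IHp _ kp).
Qed.

End NonnegativeWeights.

End DirichletForm.

Section LaplacianMatrix.
Variables (R : realType) (n : nat).
Implicit Types (g : 'I_n -> 'I_n -> R).

Lemma laplacian_mulmx g (z : 'cV[R]_n) i :
  (laplacian g *m z) i 0 = laplace g (fun k => z k 0) i.
Proof.
have degmx_mul : (degmx g *m z) i 0 = (\sum_k g i k) * z i 0.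
  rewrite mxE (bigD1 i) //= mxE eqxx [X in _ + X]big1 ?addr0 // => k ki.
  by rewrite mxE eq_sym (negbTE ki) mul0r.
rewrite mulmxBl mxE degmx_mul !mxE /laplace mulr_suml -sumrB.
by apply: eq_bigr => k _; rewrite mxE; ring.
Qed.

Lemma laplacian_tr g : commutative g -> (laplacian g)^T = laplacian g.
Proof.
move=> gC; apply/matrixP => i j.
by rewrite !mxE eq_sym; case: eqP => [->|_] //; rewrite gC.
Qed.

Lemma laplacian_row_sum g i : \sum_j laplacian g i j = 0.
Proof.
under eq_bigr do rewrite !mxE.
rewrite sumrB -big_mkcond (big_pred1 i) ?subrr // => j; exact: eq_sym.
Qed.

Lemma dot_bvec (x : 'I_n -> R) a b : \sum_i x i * bvec R a b i 0 = x a - x b.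
Proof.
under eq_bigr do rewrite mxE mulrBr.
rewrite sumrB (bigD1 a) //= eqxx mulr1 big1 ?addr0 => [|i /negbTE ->]; last first.
  by rewrite mulr0.
by rewrite (bigD1 b) //= eqxx mulr1 big1 ?addr0 // => i /negbTE ->; rewrite mulr0.
Qed.

Definition meanmx : 'M[R]_n := n%:R^-1 *: const_mx 1.

Lemma meanmx_tr : meanmx^T = meanmx.
Proof. by apply/matrixP => i j; rewrite !mxE. Qed.

Lemma meanmx_mulmx (z : 'cV[R]_n) i : (meanmx *m z) i 0 = n%:R^-1 * \sum_k z k 0.
Proof.
rewrite -scalemxAl mxE mxE; congr (_ * _); apply: eq_bigr => k _.
by rewrite !mxE mul1r.
Qed.

Lemma laplacian_meanmx g : laplacian g *m meanmx = 0.
Proof.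
apply/matrixP => i j; rewrite -scalemxAr !mxE -[RHS](mulr0 n%:R^-1); congr (_ * _).
rewrite -[RHS](laplacian_row_sum g i).
by apply: eq_bigr => k _; rewrite [const_mx _ _ _]mxE mulr1.
Qed.

Lemma meanmx_laplacian g : commutative g -> meanmx *m laplacian g = 0.
Proof.
move=> gC.
by rewrite -[LHS]trmxK trmx_mul laplacian_tr // meanmx_tr laplacian_meanmx trmx0.
Qed.

Section PositiveOrder.
Hypothesis n_gt0 : (0 < n)%N.

Let n_neq0 : n%:R != 0 :> R.
Proof. by rewrite pnatr_eq0 -lt0n. Qed.

Lemma meanmx_idem : meanmx *m meanmx = meanmx.
Proof.
have ones_sqr : (const_mx 1 : 'M[R]_n) *m (const_mx 1 : 'M_n) = n%:R *: const_mx 1.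
  apply/matrixP => i j; rewrite !mxE.
  by under eq_bigr do rewrite !mxE mulr1; rewrite sumr_const card_ord mulr1.
by rewrite -scalemxAl -scalemxAr ones_sqr !scalerA mulfVK.
Qed.

Lemma meanmx_mul_laplacianD g : commutative g ->
  meanmx *m (laplacian g + meanmx) = meanmx.
Proof. by move=> gC; rewrite mulmxDr meanmx_laplacian // meanmx_idem add0r. Qed.

Lemma laplacianD_mul_meanmx g : (laplacian g + meanmx) *m meanmx = meanmx.
Proof. by rewrite mulmxDl laplacian_meanmx meanmx_idem add0r. Qed.

Lemma laplacianD_meanmx_unit g : commutative g -> (forall i j, 0 <= g i j) ->
  connected_graph g -> laplacian g + meanmx \in unitmx.
Proof.
move=> gC g_ge0 g_conn; set M := laplacian g + meanmx.
have kerM (z : 'cV[R]_n) : M *m z = 0 -> z = 0.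
  move=> Mz0.
  have Jz0 : meanmx *m z = 0 by rewrite -(meanmx_mul_laplacianD gC) -mulmxA Mz0 mulmx0.
  have Lz0 : laplacian g *m z = 0 by move: Mz0; rewrite mulmxDl Jz0 addr0.
  have z_E0 : dirichlet g (fun k => z k 0) (fun k => z k 0) = 0.
    rewrite dirichletE // big1 ?mulr0 // => i _.
    by rewrite -laplacian_mulmx Lz0 mxE mulr0.
  apply/matrixP => i j; rewrite ord1 mxE.
  have := congr1 (fun A : 'cV[R]_n => A i 0) Jz0; rewrite /= meanmx_mulmx mxE.
  under eq_bigr do rewrite (dirichlet_eq0_connect g_ge0 z_E0 (g_conn _ i)).
  by rewrite sumr_const card_ord -[z i 0 *+ n]mulr_natr [z i 0 * _]mulrC mulKf.
rewrite unitmxE unitfE; apply/negP => /det0P [r r_neq0 rM0].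
have M_tr : M^T = M by rewrite linearD /= laplacian_tr // meanmx_tr.
have Mr0 : M *m r^T = 0 by rewrite -M_tr -trmx_mul rM0 trmx0.
by rewrite -[r]trmxK (kerM _ Mr0) trmx0 eqxx in r_neq0.
Qed.

(* [meanmx] projects onto the constants, which span [ker L] when the graph is
   connected; hence [L + meanmx] is invertible and the following is [L^+]. *)
Definition laplacian_pinv g := invmx (laplacian g + meanmx) - meanmx.

Section ConnectedGraph.
Variable g : 'I_n -> 'I_n -> R.
Hypotheses (gC : commutative g) (g_ge0 : forall i j, 0 <= g i j)
  (g_conn : connected_graph g).

Let M := laplacian g + meanmx.
Let M_unit : M \in unitmx := laplacianD_meanmx_unit gC g_ge0 g_conn.

Let meanmx_mul_invM : meanmx *m invmx M = meanmx.
Proof. by rewrite -{1}(meanmx_mul_laplacianD gC) -mulmxA mulmxV // mulmx1. Qed.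

Let invM_mul_meanmx : invmx M *m meanmx = meanmx.
Proof. by rewrite -{1}(laplacianD_mul_meanmx g) mulmxA mulVmx // mul1mx. Qed.

Lemma mulmx_laplacian_pinv : laplacian g *m laplacian_pinv g = 1%:M - meanmx.
Proof.
rewrite mulmxBr laplacian_meanmx subr0 -{1}[laplacian g](addrK meanmx) mulmxBl.
by rewrite mulmxV // meanmx_mul_invM.
Qed.

Lemma mulmx_pinv_laplacian : laplacian_pinv g *m laplacian g = 1%:M - meanmx.
Proof.
rewrite mulmxBl meanmx_laplacian // subr0 -{2}[laplacian g](addrK meanmx) mulmxBr.
by rewrite mulVmx // invM_mul_meanmx.
Qed.

Lemma penrose_laplacian_pinv : penrose (laplacian g) (laplacian_pinv g).
Proof.
split.
- by rewrite mulmx_laplacian_pinv mulmxBl mul1mx meanmx_laplacian // subr0.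
- rewrite mulmx_pinv_laplacian mulmxBl mul1mx mulmxBr meanmx_mul_invM meanmx_idem.
  by rewrite subrr subr0.
- by rewrite mulmx_laplacian_pinv linearB /= trmx1 meanmx_tr.
- by rewrite mulmx_pinv_laplacian linearB /= trmx1 meanmx_tr.
Qed.

End ConnectedGraph.
End PositiveOrder.
End LaplacianMatrix.

Arguments meanmx {R n}.

Section Resistance.
Variables (R : realType) (n : nat).
Implicit Types (g : 'I_n -> 'I_n -> R).

Lemma connected_graph_le g g' : (forall i j, g i j <= g' i j) ->
  connected_graph g -> connected_graph g'.
Proof.
move=> g_le g_conn x y; apply: connect_sub (g_conn x y) => i j g_ij.
exact/connect1/(lt_le_trans g_ij (g_le i j)).
Qed.

Lemma dirichlet_potential g (u : 'I_n -> R) (z : 'cV[R]_n) a b : commutative g ->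
  laplacian g *m z = bvec R a b -> dirichlet g u (fun k => z k 0) = 2 * (u a - u b).
Proof.
move=> gC Lz; rewrite dirichletE //.
by under eq_bigr do rewrite -laplacian_mulmx Lz; rewrite dot_bvec.
Qed.

Section ConnectedGraph.
Variable g : 'I_n -> 'I_n -> R.
Hypotheses (gC : commutative g) (g_ge0 : forall i j, 0 <= g i j)
  (g_conn : connected_graph g).

Lemma resistance_potential a b (z : 'cV[R]_n) : laplacian g *m z = bvec R a b ->
  resistance g a b = z a 0 - z b 0.
Proof.
move=> Lz; have n_gt0 : (0 < n)%N := leq_ltn_trans (leq0n a) (ltn_ord a).
have [LXL _ _ _] := epsilon_spec (inhabits 0) (penrose (laplacian g))
  (ex_intro _ _ (penrose_laplacian_pinv n_gt0 gC g_ge0 g_conn)).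
rewrite /resistance /pinv -Lz trmx_mul laplacian_tr //.
set X := epsilon _ _ in LXL *.
have -> : z^T *m laplacian g *m X *m (laplacian g *m z)
          = z^T *m (laplacian g *m X *m laplacian g) *m z by rewrite !mulmxA.
rewrite LXL -mulmxA Lz mxE -(dot_bvec (fun k => z k 0)).
by apply: eq_bigr => i _; rewrite mxE.
Qed.

Lemma exists_potential a b : exists z, laplacian g *m z = bvec R a b.
Proof.
have n_gt0 : (0 < n)%N := leq_ltn_trans (leq0n a) (ltn_ord a).
exists (laplacian_pinv g *m bvec R a b).
rewrite mulmxA mulmx_laplacian_pinv // mulmxBl mul1mx.
suff -> : meanmx *m bvec R a b = 0 by rewrite subr0.
apply/matrixP => i j; rewrite ord1 meanmx_mulmx mxE.
have bvec_sum0 : \sum_k bvec R a b k 0 = 0.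
  rewrite -[RHS](subrr (1 : R)) -(dot_bvec (fun=> 1) a b).
  by apply: eq_bigr => k _; rewrite mul1r.
by rewrite bvec_sum0 mulr0.
Qed.

Lemma resistance_gt0 a b : a != b -> 0 < resistance g a b.
Proof.
move=> ab; have [z Lz] := exists_potential a b.
have z_E := dirichlet_potential (fun k => z k 0) gC Lz.
rewrite (resistance_potential Lz) lt_def; apply/andP; split; last first.
  by have := dirichlet_ge0 g_ge0 (fun k => z k 0); rewrite z_E pmulr_rge0.
apply/eqP => z_ab0; rewrite z_ab0 mulr0 in z_E.
have := congr1 (fun A : 'cV[R]_n => A a 0) Lz; rewrite /= laplacian_mulmx /laplace.
rewrite big1 => [|j _]; last first.
  by rewrite (dirichlet_eq0_connect g_ge0 z_E (g_conn a j)) subrr mulr0.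
by rewrite mxE eqxx (negbTE ab) subr0 => /esym/eqP; rewrite oner_eq0.
Qed.

End ConnectedGraph.

Section Rayleigh.
Variables g g' : 'I_n -> 'I_n -> R.
Hypotheses (gC : commutative g) (g'C : commutative g')
  (g_ge0 : forall i j, 0 <= g i j) (g_conn : connected_graph g)
  (g_le : forall i j, g i j <= g' i j).

Let g'_ge0 i j : 0 <= g' i j := le_trans (g_ge0 i j) (g_le i j).
Let g'_conn : connected_graph g' := connected_graph_le g_le g_conn.

Lemma resistance_gap_lb a b :
  (g' a b - g a b) * resistance g' a b ^+ 2
    <= 2 * (resistance g a b - resistance g' a b).
Proof.
have [y Ly] := exists_potential gC g_ge0 g_conn a b.
have [z Lz] := exists_potential g'C g'_ge0 g'_conn a b.
rewrite (resistance_potential gC g_ge0 g_conn Ly).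
rewrite (resistance_potential g'C g'_ge0 g'_conn Lz).
have y_E := dirichlet_potential (fun k => y k 0) gC Ly.
have zy_E := dirichlet_potential (fun k => z k 0) gC Ly.
have z_E' := dirichlet_potential (fun k => z k 0) g'C Lz.
have yz_ge0 := dirichlet_ge0 g_ge0 (fun k => y k 0 - z k 0).
have gap_ge0 i j : 0 <= g' i j - g i j by rewrite subr_ge0.
have z_gap := dirichlet_ge_edge gap_ge0 (fun k => z k 0) a b.
rewrite dirichletB y_E zy_E in yz_ge0.
rewrite -dirichlet_weightsB z_E' in z_gap.
lra.
Qed.

Lemma resistance_le a b : resistance g' a b <= resistance g a b.
Proof.
have := resistance_gap_lb a b.
have : 0 <= (g' a b - g a b) * resistance g' a b ^+ 2.
  by rewrite mulr_ge0 ?sqr_ge0 // subr_ge0.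
lra.
Qed.

Lemma resistance_lt a b : a != b -> g a b < g' a b ->
  resistance g' a b < resistance g a b.
Proof.
move=> ab g_lt; have := resistance_gap_lb a b.
have : 0 < (g' a b - g a b) * resistance g' a b ^+ 2.
  by rewrite mulr_gt0 ?exprn_gt0 ?subr_gt0 ?resistance_gt0.
lra.
Qed.

End Rayleigh.
End Resistance.

Section Augment.
Variables (R : realType) (n : nat) (w : 'I_n -> 'I_n -> R) (v : 'I_n) (c : 'I_n -> R).
Implicit Types (S T : {set 'I_n}) (x y u : 'I_n).

Lemma augment_comm S : commutative w -> commutative (augment w v c S).
Proof.
by move=> wC x y; rewrite /augment wC; case: (eqVneq x v) => [->|_];
  case: (eqVneq y v) => [->|_].
Qed.

Lemma augment_set0 x y : augment w v c set0 x y = w x y.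
Proof. by rewrite /augment !in_set0 !andbF addr0. Qed.

Lemma augment_subset S T x y :
  S \subset T -> v \notin T -> {in T, forall u, 0 <= c u} ->
  augment w v c S x y <= augment w v c T x y.
Proof.
move=> sST vT c_ge0; rewrite /augment lerD2l.
have vS : v \notin S := contra (subsetP sST v) vT.
have le_ext u : (if u \in S then c u else 0) <= (if u \in T then c u else 0).
  have [uS|_] := boolP (u \in S); first by rewrite (subsetP sST u uS).
  by case: ifP => // uT; apply: c_ge0.
case: (eqVneq x v) => [->|_]; case: (eqVneq y v) => [->|_] //=.
by rewrite (negbTE vS) (negbTE vT).
Qed.

Lemma augment_at_v S u :
  u != v -> augment w v c S u v = w u v + (if u \in S then c u else 0).
Proof. by move=> uv; rewrite /augment (negbTE uv) eqxx. Qed.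

End Augment.

Theorem theorem1 (R : realType) (n : nat) (w : 'I_n -> 'I_n -> R) (v : 'I_n)
    (Ev : {set 'I_n}) (c : 'I_n -> R) :
  weighted_graph w -> connected_graph w ->
  (forall u, u \in Ev -> [/\ u != v, w u v = 0 & 0 < c u]) ->
  forall S T : {set 'I_n}, S \proper T -> T \subset Ev ->
    node_resistance (augment w v c T) v < node_resistance (augment w v c S) v.
Proof.
move=> [wC [w_ge0 _]] w_conn Ev_new S T /properP [sST [u0 u0T u0S]] sTE.
have [u0v _ c_u0] := Ev_new u0 (subsetP sTE u0 u0T).
have vT : v \notin T by apply/negP => /(subsetP sTE) /Ev_new [/eqP].
have c_ge0 : {in T, forall u, 0 <= c u} by move=> u /(subsetP sTE) /Ev_new [_ _ /ltW].
have w_le_S x y : w x y <= augment w v c S x y.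
  rewrite -(augment_set0 w v c) augment_subset ?sub0set //.
    exact: contra (subsetP sST v) vT.
  by move=> u /(subsetP sST); apply: c_ge0.
have S_ge0 x y : 0 <= augment w v c S x y := le_trans (w_ge0 x y) (w_le_S x y).
have S_conn := connected_graph_le w_le_S w_conn.
have S_le_T x y := augment_subset w x y sST vT c_ge0.
have [SC TC] := (augment_comm v c S wC, augment_comm v c T wC).
rewrite /node_resistance (bigD1 u0) //= [X in _ < X](bigD1 u0) //=.
apply: ltr_leD; last by apply: ler_sum => u _; apply: resistance_le.
by apply: resistance_lt; rewrite // !augment_at_v // u0T (negbTE u0S) addr0 ltrDl.
Qed.
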